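(* Let $f:\mathbb{R}^n\to\mathbb{R}$ be differentiable, $\mu$-strongly convex, with $L$-Lipschitz gradient $\nabla f$, and let $x^*$ be its unique minimizer. Let $\mathcal{E}^t$ denote the event $\|\nabla f(x^t)\|_\infty\le\eta$. Then the iterate $x^{t+1}$ of Markov gradient descent satisfies $$\mathbb{E}\left[\|x^{t+1}-x^*\|_2^2\,\middle|\,x^t,\mathcal{E}^t\right]\le\Big(1-\frac{2\alpha\mu}{\eta}\Big)\|x^t-x^*\|_2^2+\frac{L\alpha^2\sqrt{n}}{\eta}\|x^t-x^*\|_2 .$$
   Context: A differentiable $f$ is $\mu$-strongly convex if $\langle\nabla f(x)-\nabla f(y),x-y\rangle\ge\mu\|x-y\|_2^2$ for all $x,y$. Markov gradient descent (MGD) with lattice resolution $\alpha>0$ and normalizer $\eta>0$: start at $x^0\in\alpha\mathbb{Z}^n$; at step $t$, for each coordinate $i$, conditionally on $x^t$, $\Delta^t_i\in\{0,1\}$ is Bernoulli with $\mathbb{P}[\Delta^t_i=1\mid x^t]=\min(|\partial_i f(x^t)|/\eta,1)$, and $x^{t+1}_i=x^t_i-\alpha\,\mathrm{sgn}(\partial_i f(x^t))\Delta^t_i$. *)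

From HB Require Import structures.
From mathcomp Require Import all_boot all_order all_algebra.
From mathcomp Require Import all_classical all_reals all_analysis.
Set Implicit Arguments. Unset Strict Implicit. Unset Printing Implicit Defensive.
Import Order.TTheory GRing.Theory Num.Theory.
Import numFieldNormedType.Exports.
Local Open Scope ring_scope.

Definition dotv {R : realType} {n : nat} (u v : 'rV[R]_n) : R :=
  \sum_(i < n) u 0 i * v 0 i.
Definition norm2sq {R : realType} {n : nat} (u : 'rV[R]_n) : R := dotv u u.
Definition norm2 {R : realType} {n : nat} (u : 'rV[R]_n) : R := Num.sqrt (norm2sq u).
Definition norminf {R : realType} {n : nat} (u : 'rV[R]_n) : R :=
  \big[Num.max/0]_(i < n) `|u 0 i|.

Definition grad {R : realType} {n : nat} (f : 'rV[R]_n -> R) (x : 'rV[R]_n)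
  : 'rV[R]_n := \row_i ('d f x (delta_mx 0 i : 'rV[R]_n)).

Definition strongly_convex {R : realType} {n : nat} (mu : R)
  (f : 'rV[R]_n -> R) : Prop :=
  forall x y, mu * norm2sq (x - y) <= dotv (grad f x - grad f y) (x - y).

Definition lipschitz_grad {R : realType} {n : nat} (L : R)
  (f : 'rV[R]_n -> R) : Prop :=
  forall x y, norm2 (grad f x - grad f y) <= L * norm2 (x - y).

Definition on_lattice {R : realType} {n : nat} (alpha : R) (x : 'rV[R]_n) : Prop :=
  exists z : 'I_n -> int, forall i, x 0 i = (z i)%:~R * alpha.

Definition mgd_step {R : realType} {n : nat} (f : 'rV[R]_n -> R) (alpha : R)
  (x : 'rV[R]_n) (d : {ffun 'I_n -> bool}) : 'rV[R]_n :=
  \row_i (x 0 i - alpha * Num.sg (grad f x 0 i) * (d i)%:R).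

(* p is a conditional law (pmf on {0,1}^n) of the coin vector Delta^t given
   x^t = x, whose marginals are the MGD Bernoulli laws. The joint law across
   coordinates is left arbitrary (the paper only specifies marginals). *)
Definition mgd_law {R : realType} {n : nat} (f : 'rV[R]_n -> R) (eta : R)
  (x : 'rV[R]_n) (p : {ffun 'I_n -> bool} -> R) : Prop :=
  (forall d, 0 <= p d) /\ (\sum_(d : {ffun 'I_n -> bool}) p d = 1) /\
  (forall i, \sum_(d : {ffun 'I_n -> bool} | d i) p d = Num.min (`|grad f x 0 i| / eta) 1).

(* Expectation of g(x^{t+1}) under the law p given x^t = x. *)
Definition mgd_expect {R : realType} {n : nat} (f : 'rV[R]_n -> R) (alpha : R)
  (x : 'rV[R]_n) (p : {ffun 'I_n -> bool} -> R) (g : 'rV[R]_n -> R) : R :=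
  \sum_(d : {ffun 'I_n -> bool}) p d * g (mgd_step f alpha x d).

From HB Require Import structures.
From mathcomp Require Import all_boot all_order all_algebra.
From mathcomp Require Import all_classical all_reals all_analysis.
From mathcomp Require Import ring lra.
Import Order.TTheory GRing.Theory Num.Theory.
Import numFieldNormedType.Exports.
Local Open Scope ring_scope.

(* Given x, coordinate i moves by -alpha sgn(g_i), g = grad f x, with probability
   |g_i| / eta (at most 1 on the event ||g||_oo <= eta), so the expected squared
   distance to x* is exactly
     ||x - x*||^2 - (2 alpha / eta) <g, x - x*> + (alpha^2 / eta) ||g||_1.
   Since grad f x* = 0, strong convexity gives <g, x - x*> >= mu ||x - x*||^2,
   and Cauchy-Schwarz with the Lipschitz gradient gives
   ||g||_1 <= sqrt n ||g||_2 <= sqrt n L ||x - x*||. *)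

Lemma sqr_sum_le_card_sum_sqr {R : realFieldType} {I : finType} (a : I -> R) :
  (\sum_i a i) ^+ 2 <= #|I|%:R * \sum_i a i ^+ 2.
Proof.
have lagrange : \sum_i \sum_j (a i - a j) ^+ 2
    = 2 * (#|I|%:R * \sum_i a i ^+ 2 - (\sum_i a i) ^+ 2).
  under eq_bigr do under eq_bigr do rewrite sqrrB.
  under eq_bigr do rewrite !big_split /= sumrN -mulr_sumr sumr_const -mulr_natl.
  rewrite !big_split /= sumrN sumr_const -mulr_natl.
  have -> : \sum_i a i * (#|I|%:R * 1 * a i) = #|I|%:R * \sum_i a i ^+ 2.
    by rewrite mulr_sumr; apply: eq_bigr => i _; ring.
  have -> : \sum_i \sum_j a i * a j *+ 2 = (\sum_i a i) ^+ 2 *+ 2.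
    rewrite expr2 big_distrl -sumrMnl; apply: eq_bigr => i _ /=.
    by rewrite big_distrr -sumrMnl.
  rewrite -mulr_natl; ring.
have : 0 <= \sum_i \sum_j (a i - a j) ^+ 2.
  by apply: sumr_ge0 => i _; apply: sumr_ge0 => j _; exact: sqr_ge0.
rewrite lagrange; lra.
Qed.

Lemma sum_abs_le_sqrt_dim_norm2 {R : realType} {n : nat} (u : 'rV[R]_n) :
  \sum_i `|u 0 i| <= Num.sqrt n%:R * norm2 u.
Proof.
rewrite /norm2 /norm2sq /dotv -sqrtrM ?ler0n //.
have sum_ge0 : 0 <= \sum_i `|u 0 i| by apply: sumr_ge0 => i _; exact: normr_ge0.
rewrite -(ger0_norm sum_ge0) -sqrtr_sqr ler_wsqrtr //.
have -> : \sum_i u 0 i * u 0 i = \sum_i `|u 0 i| ^+ 2.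
  by apply: eq_bigr => i _; rewrite real_normK ?num_real // expr2.
by rewrite -[n in n%:R]card_ord sqr_sum_le_card_sum_sqr.
Qed.

Lemma abs_coord_le_norminf {R : realType} {n : nat} (u : 'rV[R]_n) (i : 'I_n) :
  `|u 0 i| <= norminf u.
Proof. exact: (le_bigmax 0 (fun i => `|u 0 i|) i). Qed.

Lemma derive_eq0_at_min {R : realFieldType} {V : normedModType R} (f : V -> R)
    (a v : V) :
  (forall t : R, derivable f (t *: v + a) v) -> (forall y, f a <= f y) ->
  'D_v f a = 0.
Proof.
move=> fdv fmin; pose h t := f (t *: v + a).
have quotientE t : (fun s : R => s^-1 *: ((h \o shift t) (s *: 1) - h t)) =
    (fun s : R => s^-1 *: ((f \o shift (t *: v + a)) (s *: v) - f (t *: v + a))).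
  by apply/funext => s /=; rewrite /h [s *: 1]mulr1 scalerDl addrA.
have hder t : derivable h t 1 by rewrite /derivable quotientE; exact: fdv.
have [|t _|||_ <-] := @derive1_at_min R h (-1) 1 0.
- exact: (le_trans (lerN10 R) ler01).
- exact: hder.
- by rewrite in_itv /= ltrN10 ltr01.
- by move=> t _; rewrite /h scale0r add0r.
- by rewrite /derive quotientE scale0r add0r.
Qed.

Lemma grad_eq0_at_min {R : realType} {n : nat} (f : 'rV[R]_n -> R) (xs : 'rV[R]_n) :
  (forall y, differentiable f y) -> (forall y, f xs <= f y) -> grad f xs = 0.
Proof.
move=> df fmin; apply/rowP => i; rewrite !mxE -deriveE //.
by apply: derive_eq0_at_min fmin => t; exact: diff_derivable.
Qed.

Lemma expect_coin_affine {R : comPzRingType} {I : finType}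
    (p : {ffun I -> bool} -> R) (a b : I -> R) :
  \sum_(d : {ffun I -> bool}) p d = 1 ->
  \sum_(d : {ffun I -> bool}) p d * \sum_i (a i + (d i)%:R * b i)
  = \sum_i (a i + b i * \sum_(d : {ffun I -> bool} | d i) p d).
Proof.
move=> p1; under eq_bigr do rewrite mulr_sumr; rewrite exchange_big /=.
apply: eq_bigr => i _; under eq_bigr do rewrite mulrDr.
rewrite big_split /= -mulr_suml p1 mul1r mulr_sumr; congr (_ + _).
rewrite [RHS]big_mkcond; apply: eq_bigr => d _.
by case: (d i); rewrite /= ?mul0r ?mulr0 ?mul1r // mulrC.
Qed.

Section MarkovGradientDescent.
Context {R : realType} {n : nat} {f : 'rV[R]_n -> R} {alpha eta : R}.

Lemma norm2sq_mgd_step_sub (x xs : 'rV[R]_n) (d : {ffun 'I_n -> bool}) :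
  let s i := Num.sg (grad f x 0 i) in
  norm2sq (mgd_step f alpha x d - xs) =
  \sum_i ((x - xs) 0 i ^+ 2
          + (d i)%:R * (alpha ^+ 2 * s i ^+ 2 - 2 * alpha * s i * (x - xs) 0 i)).
Proof.
by apply: eq_bigr => i _; rewrite !mxE; case: (d i) => /=; ring.
Qed.

Lemma mgd_law_marginal {x : 'rV[R]_n} {p : {ffun 'I_n -> bool} -> R} (i : 'I_n) :
  0 < eta -> mgd_law f eta x p -> `|grad f x 0 i| <= eta ->
  \sum_(d : {ffun 'I_n -> bool} | d i) p d = `|grad f x 0 i| / eta.
Proof.
by move=> eta_gt0 [_ [_ ->]] gi_le; apply/min_idPl; rewrite ler_pdivrMr // mul1r.
Qed.

Lemma mgd_expect_norm2sq {x : 'rV[R]_n} {p : {ffun 'I_n -> bool} -> R} (xs : 'rV[R]_n) :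
  0 < eta -> mgd_law f eta x p -> norminf (grad f x) <= eta ->
  mgd_expect f alpha x p (fun y => norm2sq (y - xs)) =
  norm2sq (x - xs) + alpha ^+ 2 / eta * \sum_i `|grad f x 0 i|
    - 2 * alpha / eta * dotv (grad f x) (x - xs).
Proof.
move=> eta_gt0 law g_le; have [_ [p1 _]] := law.
rewrite /mgd_expect; under eq_bigr do rewrite norm2sq_mgd_step_sub.
rewrite expect_coin_affine // /norm2sq /dotv !mulr_sumr -big_split -sumrB /=.
apply: eq_bigr => i _.
rewrite (mgd_law_marginal i eta_gt0 law (le_trans (abs_coord_le_norminf _ i) g_le)).
set g := grad f x 0 i; set u := (x - xs) 0 i.
have sg2_norm : Num.sg g ^+ 2 * `|g| = `|g|.
  by rewrite sqr_sg; case: eqP => [->|_]; rewrite ?normr0 ?mulr0 ?mul1r.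
transitivity (u * u + alpha ^+ 2 / eta * (Num.sg g ^+ 2 * `|g|)
  - 2 * alpha / eta * ((Num.sg g * `|g|) * u)); first by ring.
by rewrite sg2_norm -numEsg.
Qed.

End MarkovGradientDescent.

Theorem corollary6p4 (R : realType) (n : nat) (f : 'rV[R]_n -> R)
  (mu L alpha eta : R) (xstar x : 'rV[R]_n) (p : {ffun 'I_n -> bool} -> R) :
  0 < mu -> 0 <= L -> 0 < alpha -> 0 < eta ->
  (forall y, differentiable f y) ->
  strongly_convex mu f ->
  lipschitz_grad L f ->
  (forall y, f xstar <= f y) ->
  on_lattice alpha x ->
  mgd_law f eta x p ->
  norminf (grad f x) <= eta ->
  mgd_expect f alpha x p (fun y => norm2sq (y - xstar))
    <= (1 - 2 * alpha * mu / eta) * norm2sq (x - xstar)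
       + L * alpha ^+ 2 * Num.sqrt (n%:R) / eta * norm2 (x - xstar).
Proof.
move=> _ _ alpha_gt0 eta_gt0 df sc lg fmin _ law g_le.
rewrite (mgd_expect_norm2sq xstar eta_gt0 law g_le).
have grad_xstar := grad_eq0_at_min f xstar df fmin.
have descent := sc x xstar; rewrite grad_xstar subr0 in descent.
have g_norm := lg x xstar; rewrite grad_xstar subr0 in g_norm.
have g_l1 : \sum_i `|grad f x 0 i| <= Num.sqrt n%:R * (L * norm2 (x - xstar)).
  exact: le_trans (sum_abs_le_sqrt_dim_norm2 _) (ler_wpM2l (sqrtr_ge0 _) g_norm).
have c_ge0 : 0 <= alpha / eta by rewrite ltW ?divr_gt0.
have drift := ler_wpM2l c_ge0 descent.
have noise := ler_wpM2l (mulr_ge0 (ltW alpha_gt0) c_ge0) g_l1.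
lra.
Qed.
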